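(* Let $m\mid n$ with $n\ge 3$. Let $A(Y_0,\dots,Y_{m-1})\in\mathbb C[Y_0,\dots,Y_{m-1}]$ be such that for every $\sigma\in S_m$, $A(Y_{\sigma(0)},\dots,Y_{\sigma(m-1)})=\pm A(Y_0,\dots,Y_{m-1})$. Let $B(Z_0,\dots,Z_{n/m-1})\in\mathbb C[Z_0,\dots,Z_{n/m-1}]$ be symmetric, let $B_i=B(X_i,X_{i+m},\dots,X_{i+(n/m-1)m})$ for $0\le i\le m-1$, and let $F=A(B_0,\dots,B_{m-1})\in\mathbb C[X_0,\dots,X_{n-1}]$. Assume $\deg_{X_0}F(X_0,0,\dots,0)>0$. Then $\prod_{\phi\in\mathcal E_{n,m}}\phi(F)\in\mathbb C[X_0,\dots,X_{n-1}]$ is symmetric in $X_0,\dots,X_{n-1}$.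
   Context: The symmetric group $S_n$ of permutations of $\{0,1,\dots,n-1\}$ (identified with $\mathbb Z/n\mathbb Z$) acts on $\mathbb C[X_0,\dots,X_{n-1}]$ by permuting indices of the indeterminates. Partition $\{0,\dots,n-1\}$ into blocks $I_i=\{i+mj:0\le j\le n/m-1\}$, $0\le i\le m-1$. Let $\mathcal P_{n,m}$ be the set of all unordered partitions of $\{0,1,\dots,n-1\}$ into $m$ parts of size $n/m$. For each $\{P_0,\dots,P_{m-1}\}\in\mathcal P_{n,m}$ choose a permutation $\phi_{\{P_0,\dots,P_{m-1}\}}\in S_n$ mapping $I_i$ onto $P_i$ for $0\le i\le m-1$, and let $\mathcal E_{n,m}=\{\phi_{\{P_0,\dots,P_{m-1}\}}:\{P_0,\dots,P_{m-1}\}\in\mathcal P_{n,m}\}$; this is a left transversal in $S_n$ of the wreath product $S_m\wr S_{n/m}$, the subgroup of permutations that permute the blocks $I_i$ among themselves and permute elements within blocks. *)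

From mathcomp Require Import all_boot all_algebra all_fingroup.
From mathcomp Require Import Rstruct.
From mathcomp.real_closed Require Import complex.
From mathcomp Require Export mpoly.

Import GRing.Theory.
Local Open Scope ring_scope.

Definition C : comUnitRingType := complex Rdefinitions.R.

(* The variable X_{i + j m} of C[X_0..X_{n-1}] (the guard i + j m < n always
   holds when m | n, i < m, j < n/m). *)
Definition blockvar (n m : nat) (i : 'I_m) (j : 'I_(n %/ m)) : {mpoly C[n]} :=
  oapp (fun x : 'I_n => 'X_x) 0 (insub (i + j * m)%N).

Definition Bpart (n m : nat) (B : {mpoly C[n %/ m]}) (i : 'I_m) : {mpoly C[n]} :=
  B \mPo [tuple blockvar n m i j | j < (n %/ m)%N].

Definition Fpoly (n m : nat) (A : {mpoly C[m]}) (B : {mpoly C[n %/ m]})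
  : {mpoly C[n]} :=
  A \mPo [tuple Bpart n m B i | i < m].

Definition restrX0 (n : nat) (F : {mpoly C[n]}) : {poly C} :=
  mmap (@polyC C) (fun j : 'I_n => if val j == 0%N then 'X else 0) F.

(* The block I_i = {i + m j : 0 <= j <= n/m - 1} = {x < n | x = i mod m}. *)
Definition block (n m : nat) (i : 'I_m) : {set 'I_n} :=
  [set x : 'I_n | (x %% m == i)%N].

Definition partitions_nm (n m : nat) : {set {set {set 'I_n}}} :=
  [set P | [&& partition P [set: 'I_n], #|P| == m
             & [forall S in P, #|S| == (n %/ m)%N]]].

(* phi restricted to P_{n,m} is a choice of permutations phi_P mapping the
   blocks I_0..I_{m-1} onto the parts of P (in some order), i.e. its image on
   P_{n,m} is a set E_{n,m} as in the paper. *)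
Definition transversal_choice (n m : nat) (phi : {set {set 'I_n}} -> 'S_n) :=
  forall P, P \in partitions_nm n m ->
    [set (phi P) @: block n m i | i : 'I_m] = P.

From HB Require Import structures.
From mathcomp Require Import all_boot all_algebra all_fingroup.
From mathcomp Require Import mpoly zify.
From mathcomp Require Import Rstruct.
From mathcomp.real_closed Require Import complex.
Import GRing.Theory Num.Theory.
Local Open Scope ring_scope.

(* Write G for the product.  Every s in S_n permutes P_{n,m}, and for each P
   the permutation phi_P s phi_{sP}^-1 (composed left to right, as in 'S_n)
   maps every block I_i onto a block.  Such a permutation permutes the B_i,
   since B is symmetric, so it sends F to +F or -F; hence s G = +G or -G.
   For a transposition (a b), choose k outside {a, b} (here n >= 3 is used)
   and set every variable except X_k to 0.  The transposition fixes the
   resulting univariate polynomial, which is nonzero: up to sign and a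
   block-preserving rotation taking X_0 to X_k, each factor is F(X_0,0,...,0).
   So every transposition fixes G, and transpositions generate S_n. *)

Section MmapMorphism.
Variables (n : nat) (R S T : nzRingType).

Lemma eq_mmap (f1 f2 : R -> S) (h1 h2 : 'I_n -> S) (p : {mpoly R[n]}) :
  f1 =1 f2 -> h1 =1 h2 -> mmap f1 h1 p = mmap f2 h2 p.
Proof.
move=> ef eh; apply: eq_bigr => mon _; rewrite ef; congr (_ * _).
exact: mmap1_eq.
Qed.

Lemma rmorph_mmap (g : {rmorphism S -> T}) (f : R -> S) (h : 'I_n -> S)
    (p : {mpoly R[n]}) :
  g (mmap f h p) = mmap (g \o f) (g \o h) p.
Proof.
rewrite rmorph_sum; apply: eq_bigr => mon _; rewrite rmorphM rmorph_prod.
by congr (_ * _); apply: eq_bigr => i _; rewrite rmorphXn.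
Qed.

End MmapMorphism.

Section MsymComp.
Variables (n k : nat) (R : comNzRingType).

Lemma msymXU (s : 'S_n) (i : 'I_n) : msym s ('X_i : {mpoly R[n]}) = 'X_(s i).
Proof. by rewrite /msym mmapX mmap1U. Qed.

Lemma msym_comp_mpoly (s : 'S_k) (p : {mpoly R[n]})
    (T : n.-tuple {mpoly R[k]}) :
  msym s (p \mPo T) = p \mPo [tuple msym s (tnth T i) | i < n].
Proof.
rewrite /comp_mpoly rmorph_mmap; apply: eq_mmap => [c|i] /=.
  by rewrite /msym mmapC.
by rewrite tnth_mktuple.
Qed.

End MsymComp.

Section RestrictToOneVariable.
Variables (n : nat) (R : comNzRingType).

Definition restrX (k : 'I_n) : {mpoly R[n]} -> {poly R} :=
  mmap (@polyC R) (fun i => if i == k then 'X else 0).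

HB.instance Definition _ k := GRing.RMorphism.copy (restrX k) (restrX k).

Lemma restrX_msym (k : 'I_n) (s : 'S_n) (p : {mpoly R[n]}) :
  restrX k (msym s p) = restrX (s^-1 k)%g p.
Proof.
rewrite /msym rmorph_mmap; apply: eq_mmap => [c|i] /=; rewrite /restrX.
  exact: mmapC.
by rewrite mmapX mmap1U (canF_eq (permK s)).
Qed.

End RestrictToOneVariable.

Arguments restrX {n R} k.
Arguments restrX_msym {n R}.

Lemma restrX0E (n : nat) (n_gt0 : (0 < n)%N) (p : {mpoly C[n]}) :
  restrX0 n p = restrX (Ordinal n_gt0) p.
Proof. exact: eq_mmap. Qed.

Lemma prodr_pm (R : pzRingType) (I : finType) (P : pred I) (f g : I -> R) :
    (forall i, P i -> f i = g i \/ f i = - g i) ->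
  \prod_(i | P i) f i = \prod_(i | P i) g i \/
  \prod_(i | P i) f i = - \prod_(i | P i) g i.
Proof.
move=> fg; apply: (big_ind2 (fun x y => x = y \/ x = - y)) => [|x1 x2 y1 y2|].
- by left.
- move=> [->|->] [->|->]; rewrite ?mulrNN ?mulrN ?mulNr;
    by [left | right].
- exact: fg.
Qed.

Lemma msym_tperm_symmetric (n : nat) (R : nzRingType) (p : {mpoly R[n]}) :
  (forall a b : 'I_n, msym (tperm a b) p = p) -> p \is symmetric.
Proof.
move=> tperm_p; apply/issymP => s; have [ts -> _] := prod_tpermP s.
elim: ts => [|t ts IH]; first by rewrite big_nil msym1m.
by rewrite big_cons msymMm tperm_p IH.
Qed.

Lemma exists_ord_neq2 {n : nat} (a b : 'I_n) :
  (3 <= n)%N -> exists k : 'I_n, (k != a) && (k != b).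
Proof.
move=> n_ge3; have : (0 < #|~: [set a; b]|)%N.
  have := cardsC [set a; b]; rewrite cards2 card_ord; lia.
by case/card_gt0P => k; rewrite !inE negb_or; exists k.
Qed.

Lemma symmetric_of_msym_pm (R : idomainType) (n : nat) (p : {mpoly R[n]}) :
    (2%:R : R) != 0 -> (3 <= n)%N ->
    (forall s : 'S_n, msym s p = p \/ msym s p = - p) ->
    (forall k, restrX k p != 0) ->
  p \is symmetric.
Proof.
move=> two_neq0 n_ge3 p_pm restr_neq0; apply: msym_tperm_symmetric => a b.
have [k /andP[ka kb]] := exists_ord_neq2 a b n_ge3.
case: (p_pm (tperm a b)) => // p_neg; exfalso.
have := restrX_msym k (tperm a b) p; rewrite p_neg tpermV tpermD 1?eq_sym //.
move/eqP; rewrite rmorphN eq_sym -subr_eq0 opprK -mulr2n -mulr_natr mulf_eq0.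
by rewrite -polyC_natr polyC_eq0 (negPf two_neq0) (negPf (restr_neq0 k)).
Qed.

Section Blocks.
Variables (n m : nat).
Hypotheses (m_dvd_n : (m %| n)%N) (n_gt0 : (0 < n)%N).

Let m_gt0 : (0 < m)%N := dvdn_gt0 n_gt0 m_dvd_n.

Lemma blockvar_subproof (i : 'I_m) (j : 'I_(n %/ m)) : (i + j * m < n)%N.
Proof.
case: i j => i /= lt_im [j /= lt_jq].
by move: (n %/ m)%N lt_jq (divnK m_dvd_n) => q; nia.
Qed.

Definition blockvar_idx (i : 'I_m) (j : 'I_(n %/ m)) : 'I_n :=
  Ordinal (blockvar_subproof i j).

Lemma blockvarE i j : blockvar n m i j = 'X_(blockvar_idx i j).
Proof. by rewrite /blockvar insubT ?blockvar_subproof. Qed.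

Lemma Bpart_msym (B : {mpoly C[n %/ m]}) (w : 'S_n) (i i' : 'I_m) :
    B \is symmetric -> (forall j, (w (blockvar_idx i j) %% m)%N = i') ->
  msym w (Bpart n m B i) = Bpart n m B i'.
Proof.
move=> symB w_i.
have lt_div j : (w (blockvar_idx i j) %/ m < n %/ m)%N.
  by rewrite ltn_divLR // divnK.
pose pi j : 'I_(n %/ m) := Ordinal (lt_div j).
have wE j : w (blockvar_idx i j) = blockvar_idx i' (pi j).
  by apply: val_inj; rewrite /= -(w_i j) addnC -divn_eq.
have pi_inj : injective pi.
  move=> j1 j2 e; have := wE j1; rewrite e -wE => /perm_inj /(congr1 val) /=.
  by move/addnI/eqP; rewrite eqn_pmul2r // => /eqP; apply: val_inj.
set Xi := [tuple blockvar n m i j | j < n %/ m].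
set Xi' := [tuple blockvar n m i' j | j < n %/ m].
have TE : [tuple msym w (tnth Xi j) | j < n %/ m] =
          [tuple tnth Xi' (perm pi_inj j) | j < n %/ m].
  by apply: eq_mktuple => j; rewrite !tnth_mktuple !blockvarE msymXU wE permE.
by rewrite /Bpart msym_comp_mpoly TE -msym_mPo (issymP _ symB).
Qed.

Lemma mod_mono_perm {w : 'S_n} : {mono w : x y / x == y %[mod m]} ->
  exists t : 'S_m,
    forall (x : 'I_n) (i : 'I_m), (x %% m)%N = i -> (w x %% m)%N = t i.
Proof.
move=> w_mono; have le_mn : (m <= n)%N := dvdn_leq n_gt0 m_dvd_n.
pose lift_m (i : 'I_m) : 'I_n := Ordinal (leq_trans (ltn_ord i) le_mn).
pose t i : 'I_m := Ordinal (ltn_pmod (w (lift_m i)) m_gt0).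
have t_inj : injective t.
  move=> i1 i2 /(congr1 val) /= /eqP; rewrite w_mono /= !modn_small //.
  by move/eqP/val_inj.
exists (perm t_inj) => x i xi; rewrite permE /=; apply/eqP.
by rewrite w_mono xi /= modn_small.
Qed.

Lemma Fpoly_msym {A : {mpoly C[m]}} {B : {mpoly C[n %/ m]}} {w : 'S_n} :
    (forall s : 'S_m, msym s A = A \/ msym s A = - A) -> B \is symmetric ->
    {mono w : x y / x == y %[mod m]} ->
  msym w (Fpoly n m A B) = Fpoly n m A B \/
  msym w (Fpoly n m A B) = - Fpoly n m A B.
Proof.
move=> symA symB w_mono; have [t wt] := mod_mono_perm w_mono.
have BE : [tuple msym w (tnth [tuple Bpart n m B i | i < m] i) | i < m] =
          [tuple tnth [tuple Bpart n m B i | i < m] (t i) | i < m].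
  apply: eq_mktuple => i; rewrite !tnth_mktuple; apply: Bpart_msym symB _ => j.
  by apply: wt; rewrite /= addnC modnMDl modn_small.
rewrite /Fpoly msym_comp_mpoly BE -msym_mPo.
by case: (symA t) => ->; [left | right; rewrite comp_mpolyN].
Qed.

Lemma blocks_mono (w : 'S_n) :
    (forall i, exists j, w @: block n m i = block n m j) ->
  {mono w : x y / x == y %[mod m]}.
Proof.
move=> w_blocks x y; set i := Ordinal (ltn_pmod x m_gt0).
have [j wij] := w_blocks i.
have memw z : (w z %% m == j)%N = (z %% m == x %% m)%N.
  by have := mem_imset (mem (block n m i)) z (@perm_inj _ w); rewrite wij !inE.
have /eqP wx : (w x %% m == j)%N by rewrite memw.
by rewrite wx eq_sym memw eq_sym.
Qed.

Lemma exists_rotation (k : 'I_n) :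
  exists2 r : 'S_n, {mono r : x y / x == y %[mod m]} & r (Ordinal n_gt0) = k.
Proof.
pose rot (x : 'I_n) : 'I_n := Ordinal (ltn_pmod (x + k) n_gt0).
have rot_inj : injective rot.
  move=> x y /(congr1 val) /= /eqP; rewrite eqn_modDr !modn_small //.
  by move/eqP/val_inj.
exists (perm rot_inj) => [x y|]; rewrite !permE.
  by rewrite /= !modn_dvdm // eqn_modDr.
by apply: val_inj; rewrite /= add0n modn_small.
Qed.

Lemma restrX_Fpoly_neq0 (A : {mpoly C[m]}) (B : {mpoly C[n %/ m]}) (k : 'I_n) :
    (forall s : 'S_m, msym s A = A \/ msym s A = - A) -> B \is symmetric ->
    restrX (Ordinal n_gt0) (Fpoly n m A B) != 0 ->
  restrX k (Fpoly n m A B) != 0.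
Proof.
move=> symA symB F0; have [r r_mono r0] := exists_rotation k.
have := restrX_msym k r (Fpoly n m A B); rewrite -r0 permK.
case: (Fpoly_msym symA symB r_mono) => ->; rewrite ?rmorphN => e.
  by rewrite e.
by rewrite -oppr_eq0 e.
Qed.

End Blocks.

Section PartitionAction.
Variables (n m : nat).

Definition act_partition (s : 'S_n) (P : {set {set 'I_n}}) : {set {set 'I_n}} :=
  [set s @: (S : {set 'I_n}) | S in P].

Lemma act_partitionK (s : 'S_n) : cancel (act_partition s) (act_partition s^-1).
Proof.
move=> P; rewrite /act_partition -imset_comp -[RHS]imset_id.
apply: eq_imset => S /=.
by rewrite -imset_comp -[RHS]imset_id; apply: eq_imset => x /=; rewrite permK.
Qed.

Lemma act_partition_nm (s : 'S_n) (P : {set {set 'I_n}}) :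
  (act_partition s P \in partitions_nm n m) = (P \in partitions_nm n m).
Proof.
suff act_nm t Q :
    Q \in partitions_nm n m -> act_partition t Q \in partitions_nm n m.
  by apply/idP/idP => [/(act_nm s^-1%g)|/act_nm//]; rewrite act_partitionK.
have imsetT : t @: [set: 'I_n] = [set: 'I_n].
  by apply/eqP; rewrite eqEcard subsetT (card_imset _ (@perm_inj _ t)) leqnn.
rewrite !inE => /and3P[partQ cardQ cardS]; apply/and3P; split.
- by rewrite -[X in partition _ X]imsetT imset_partition //; exact: perm_inj.
- by rewrite card_imset //; apply: imset_inj; exact: perm_inj.
- apply/forall_inP => _ /imsetP[S QS ->].
  by rewrite card_imset ?(forall_inP cardS) //; exact: perm_inj.
Qed.

Lemma transversal_conj_blocks (phi : {set {set 'I_n}} -> 'S_n) (s : 'S_n)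
    (P : {set {set 'I_n}}) :
    transversal_choice n m phi -> P \in partitions_nm n m ->
  forall i, exists j,
    (phi P * s * (phi (act_partition s P))^-1)%g @: block n m i = block n m j.
Proof.
move=> phiP nmP i; set Q := act_partition s P.
have : s @: (phi P @: block n m i) \in Q.
  by apply: imset_f; rewrite -[in X in _ \in X](phiP _ nmP) imset_f.
rewrite -[in X in _ \in X](phiP Q) ?act_partition_nm // => /imsetP[j _ sij].
exists j; have -> : (phi P * s * (phi Q)^-1)%g @: block n m i =
                    (phi Q)^-1%g @: (s @: (phi P @: block n m i)).
  by rewrite -!imset_comp; apply: eq_imset => x; rewrite !permM.
rewrite sij -imset_comp -[RHS]imset_id.
by apply: eq_imset => x /=; rewrite permK.
Qed.

Lemma prod_transversal_msym (R : comNzRingType) (F : {mpoly R[n]})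
    (phi : {set {set 'I_n}} -> 'S_n) (s : 'S_n) :
    transversal_choice n m phi ->
    (forall w : 'S_n, (forall i, exists j, w @: block n m i = block n m j) ->
       msym w F = F \/ msym w F = - F) ->
  let G := \prod_(P in partitions_nm n m) msym (phi P) F in
  msym s G = G \/ msym s G = - G.
Proof.
move=> phiP F_pm G.
have GE : G = \prod_(P in partitions_nm n m) msym (phi (act_partition s P)) F.
  rewrite /G (reindex_inj (can_inj (act_partitionK s))).
  by apply: eq_bigl => P; rewrite act_partition_nm.
rewrite {1}/G rmorph_prod /= GE; apply: prodr_pm => P nmP.
set w := (phi P * s * (phi (act_partition s P))^-1)%g.
have -> : (msym s (msym (phi P) F) = msym (phi (act_partition s P)) (msym w F)).
  by rewrite -!msymMm /w mulgKV.
case: (F_pm w (transversal_conj_blocks phi s P phiP nmP)) => ->; first by left.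
by right; rewrite msymN.
Qed.

End PartitionAction.

Theorem lemma5p2 (n m : nat) (hmn : (m %| n)%N) (hn : (3 <= n)%N)
  (A : {mpoly C[m]}) (B : {mpoly C[n %/ m]})
  (hA : forall s : 'S_m, msym s A = A \/ msym s A = - A)
  (hB : B \is symmetric)
  (hdeg : (0 < (size (restrX0 n (Fpoly n m A B))).-1)%N)
  (phi : {set {set 'I_n}} -> 'S_n) (hphi : transversal_choice n m phi) :
  \prod_(P in partitions_nm n m) msym (phi P) (Fpoly n m A B) \is symmetric.
Proof.
have n_gt0 : (0 < n)%N by apply: leq_trans hn.
have F0 : restrX (Ordinal n_gt0) (Fpoly n m A B) != 0.
  by apply: contraTneq hdeg; rewrite restrX0E => ->; rewrite size_poly0.
(* C is declared only as a comUnitRingType; its domain structure is the one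
   of complex R. *)
apply: (@symmetric_of_msym_pm (complex Rdefinitions.R)) => // [|s|k].
- by rewrite pnatr_eq0.
- apply: prod_transversal_msym hphi _ => w /(blocks_mono _ _ hmn n_gt0).
  exact: Fpoly_msym.
- rewrite rmorph_prod; apply/prodf_neq0 => P _ /=.
  by rewrite restrX_msym restrX_Fpoly_neq0.
Qed.
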